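(* Let $G$ be a connected bipartite graph with $n\ge 2$ vertices, $m$ edges and Randi\'c index $R=R(G)$. Then $$EE(G) \ge 2\cosh\left(\frac{m}{R}\right) + (n-2),$$ with equality if and only if $G$ is isomorphic to a complete bipartite graph $K_{p,q}$ with $p+q=n$.
   Context: All graphs are finite, simple and undirected. For a graph $G$ with adjacency matrix $A(G)$ having eigenvalues $\lambda_1\ge\cdots\ge\lambda_n$, the Estrada index is $EE(G)=\sum_{i=1}^n e^{\lambda_i}$. Writing $d(i)$ for the degree of vertex $i$ and $\mathcal{E}(G)$ for the edge set, the Randi\'c index is $R(G)=\sum_{ij\in\mathcal{E}(G)}(d(i)d(j))^{-1/2}$. $K_{p,q}$ ($p,q\ge1$) is the complete bipartite graph with parts of sizes $p$ and $q$. *)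

From Stdlib Require Import Reals Lra Lia Arith.
Open Scope R_scope.

(* A graph on the vertex set {0,...,n-1} is given by a boolean adjacency
   relation adj, required to be symmetric and irreflexive on that range. *)
Definition is_graph (n : nat) (adj : nat -> nat -> bool) : Prop :=
  (forall i j, (i < n)%nat -> (j < n)%nat -> adj i j = adj j i) /\
  (forall i, (i < n)%nat -> adj i i = false).

Fixpoint sumR (n : nat) (f : nat -> R) : R :=
  match n with
  | O => 0
  | S k => sumR k f + f k
  end.

Fixpoint countN (n : nat) (P : nat -> bool) : nat :=
  match n with
  | O => O
  | S k => (countN k P + (if P k then 1 else 0))%nat
  end.

Definition deg (n : nat) (adj : nat -> nat -> bool) (i : nat) : nat :=
  countN n (fun j => adj i j).

Fixpoint sumN (n : nat) (f : nat -> nat) : nat :=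
  match n with
  | O => O
  | S k => (sumN k f + f k)%nat
  end.

Definition num_edges (n : nat) (adj : nat -> nat -> bool) : nat :=
  sumN n (fun i => countN i (fun j => adj j i)).

Definition randic (n : nat) (adj : nat -> nat -> bool) : R :=
  sumR n (fun i => sumR i (fun j =>
    if adj j i then / sqrt (INR (deg n adj i) * INR (deg n adj j)) else 0)).

Definition adjmat (adj : nat -> nat -> bool) (i j : nat) : R :=
  if adj i j then 1 else 0.

(* lam_0, ..., lam_{n-1} is the list of eigenvalues of A(G) (with
   multiplicities): A(G) has an orthonormal eigenbasis v_0,...,v_{n-1} of R^n
   with A(G) v_k = lam_k v_k. (A(G) is real symmetric, so by the spectral
   theorem this determines the eigenvalue multiset.) *)
Definition adj_spectrum (n : nat) (adj : nat -> nat -> bool) (lam : nat -> R) : Prop :=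
  exists v : nat -> nat -> R,
    (forall k l, (k < n)%nat -> (l < n)%nat ->
       sumR n (fun t => v k t * v l t) = if Nat.eqb k l then 1 else 0) /\
    (forall k i, (k < n)%nat -> (i < n)%nat ->
       sumR n (fun j => adjmat adj i j * v k j) = lam k * v k i).

Definition estrada (n : nat) (lam : nat -> R) : R :=
  sumR n (fun i => exp (lam i)).

Inductive reach (n : nat) (adj : nat -> nat -> bool) (i : nat) : nat -> Prop :=
  | reach_refl : reach n adj i i
  | reach_step : forall j k, reach n adj i j -> (k < n)%nat -> adj j k = true ->
                 reach n adj i k.

Definition connected (n : nat) (adj : nat -> nat -> bool) : Prop :=
  forall i j, (i < n)%nat -> (j < n)%nat -> reach n adj i j.

Definition bipartite (n : nat) (adj : nat -> nat -> bool) : Prop :=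
  exists col : nat -> bool, forall i j, (i < n)%nat -> (j < n)%nat ->
    adj i j = true -> col i <> col j.

(* K_{p,q} on vertex set {0..p+q-1}: parts {0..p-1} and {p..p+q-1} *)
Definition Kpq_adj (p : nat) (i j : nat) : bool :=
  xorb (Nat.ltb i p) (Nat.ltb j p).

Definition iso_complete_bipartite (n : nat) (adj : nat -> nat -> bool) : Prop :=
  exists p q : nat, (1 <= p)%nat /\ (1 <= q)%nat /\ (p + q = n)%nat /\
    exists f : nat -> nat,
      (forall i, (i < n)%nat -> (f i < n)%nat) /\
      (forall i j, (i < n)%nat -> (j < n)%nat -> f i = f j -> i = j) /\
      (forall i j, (i < n)%nat -> (j < n)%nat -> adj i j = Kpq_adj p (f i) (f j)).

(* Let lambda be the largest adjacency eigenvalue.  Testing the quadratic form of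
   A on the vector (sqrt d_i) and applying Cauchy-Schwarz edge by edge gives
   lambda >= m/R.  As G is bipartite, -lambda is an eigenvalue too, and the
   eigenvalues sum to tr A = 0; bounding the other n - 2 terms by e^x >= 1 + x,
   EE >= e^lambda + e^-lambda + n - 2 = 2 cosh lambda + n - 2 >= 2 cosh (m/R) + n - 2.
   Equality forces all other eigenvalues to vanish, so A = lambda (a a^T - b b^T)
   has rank two, which for a loopless graph without isolated vertices means
   complete bipartite.  Conversely K_{p,q} has spectrum {+-sqrt(pq), 0^(n-2)} and
   m/R = sqrt(pq). *)

From Stdlib Require Import Reals Lra Lia.
From mathcomp Require ssreflect ssrfun ssrbool eqtype ssrnat fintype bigop ssralg matrix Rstruct.
Open Scope R_scope.

Definition orthonormal (n : nat) (v : nat -> nat -> R) : Prop :=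
  forall k l, (k < n)%nat -> (l < n)%nat ->
    sumR n (fun t => v k t * v l t) = if Nat.eqb k l then 1 else 0.

Module OrthogonalMatrix.
Import ssreflect ssrfun ssrbool eqtype ssrnat fintype bigop ssralg matrix.
Import Rstruct.

Lemma sumR_big n (f : nat -> R) : sumR n f = (\sum_(i < n) f i)%R.
Proof.
elim: n => [|n IH]; first by rewrite big_ord0.
by rewrite big_ord_recr /= IH.
Qed.

(* For a square matrix, V V^T = 1 forces V^T V = 1. *)
Lemma orthonormal_transpose n (v : nat -> nat -> R) :
  orthonormal n v -> orthonormal n (fun t k => v k t).
Proof.
Local Open Scope ring_scope.
move=> Hv i j /ltP Hi /ltP Hj.
pose V : 'M[R]_n := \matrix_(k < n, t < n) v k t.
have delta_ord (k l : 'I_n) : (if Nat.eqb k l then 1 else 0) = ((k == l)%:R : R).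
  by case: (Nat.eqb_spec k l) => [/val_inj -> | kl]; rewrite ?eqxx //; case: eqP => // /(congr1 val).
have VVt : (V *m V^T = 1%:M)%R.
  apply/matrixP => k l; rewrite !mxE -delta_ord -(Hv k l (ltP (ltn_ord k)) (ltP (ltn_ord l))).
  by rewrite sumR_big; apply: eq_bigr => t _; rewrite !mxE.
have := congr1 (fun M : 'M[R]_n => M (Ordinal Hi) (Ordinal Hj)) (mulmx1C VVt).
rewrite /= !mxE sumR_big (delta_ord (Ordinal Hi) (Ordinal Hj)) => <-.
by apply: eq_bigr => t _; rewrite !mxE.
Qed.

End OrthogonalMatrix.

(** * Finite sums *)

Lemma sumR_ext n f g : (forall i, (i < n)%nat -> f i = g i) -> sumR n f = sumR n g.
Proof.
  induction n; intros H; simpl; auto.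
  rewrite IHn by (intros; apply H; lia). rewrite H by lia. auto.
Qed.

Ltac sumR_congr := apply sumR_ext; intros ? ?.

Lemma sumR_plus n f g : sumR n (fun i => f i + g i) = sumR n f + sumR n g.
Proof. induction n; simpl; [lra | rewrite IHn; lra]. Qed.

Lemma sumR_scal n c f : sumR n (fun i => c * f i) = c * sumR n f.
Proof. induction n; simpl; [lra | rewrite IHn; lra]. Qed.

Lemma sumR_mult_r n c f : sumR n f * c = sumR n (fun i => f i * c).
Proof. induction n; simpl; [lra | rewrite <- IHn; lra]. Qed.

Lemma sumR_const n c : sumR n (fun _ => c) = INR n * c.
Proof. induction n; simpl sumR; [simpl; lra | rewrite IHn, S_INR; lra]. Qed.

Lemma sumR_le n f g : (forall i, (i < n)%nat -> f i <= g i) -> sumR n f <= sumR n g.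
Proof.
  induction n; intros H; simpl; [lra |].
  assert (f n <= g n) by (apply H; lia).
  assert (sumR n f <= sumR n g) by (apply IHn; intros; apply H; lia).
  lra.
Qed.

Lemma sumR_nonneg n f : (forall i, (i < n)%nat -> 0 <= f i) -> 0 <= sumR n f.
Proof.
  intros H. replace 0 with (sumR n (fun _ => 0)) by (rewrite sumR_const; ring).
  apply sumR_le; auto.
Qed.

Lemma sumR_swap n m (f : nat -> nat -> R) :
  sumR n (fun i => sumR m (fun j => f i j)) = sumR m (fun j => sumR n (fun i => f i j)).
Proof.
  induction n; simpl.
  - rewrite sumR_const; ring.
  - rewrite IHn, <- sumR_plus; auto.
Qed.

Lemma sumR_ge_term n f k :
  (forall i, (i < n)%nat -> 0 <= f i) -> (k < n)%nat -> f k <= sumR n f.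
Proof.
  induction n; intros H Hk; [lia |]. simpl.
  assert (0 <= sumR n f) by (apply sumR_nonneg; intros; apply H; lia).
  destruct (Nat.eq_dec k n) as [-> | Hne]; [lra |].
  assert (f k <= sumR n f) by (apply IHn; [intros; apply H; lia | lia]).
  assert (0 <= f n) by (apply H; lia).
  lra.
Qed.

Lemma sumR_neq0 n f : sumR n f <> 0 -> exists k, (k < n)%nat /\ f k <> 0.
Proof.
  induction n; simpl; intros H; [lra |].
  destruct (Req_dec_T (f n) 0) as [E | E].
  - destruct IHn as [k [Hk Hf]]; [lra |]. exists k; split; auto; lia.
  - exists n; split; auto.
Qed.

Lemma sumR_delta n i f :
  (i < n)%nat -> sumR n (fun j => if Nat.eqb i j then f j else 0) = f i.
Proof.
  intros Hi. induction n; [lia |]. simpl.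
  destruct (Nat.eqb_spec i n) as [-> | Hne].
  - rewrite (sumR_ext n _ (fun _ => 0)), sumR_const by
      (intros j Hj; destruct (Nat.eqb_spec n j); [lia | auto]).
    ring.
  - rewrite IHn by lia. ring.
Qed.

Lemma sumR_delta_mul n i f :
  (i < n)%nat -> sumR n (fun j => (if Nat.eqb i j then 1 else 0) * f j) = f i.
Proof.
  intros Hi. rewrite <- (sumR_delta n i f Hi).
  sumR_congr. destruct (Nat.eqb i _); ring.
Qed.

Lemma sumR_split_pair n f k0 k1 : (k0 < n)%nat -> (k1 < n)%nat -> k0 <> k1 ->
  sumR n f = f k0 + f k1 + sumR n (fun k => if orb (Nat.eqb k0 k) (Nat.eqb k1 k) then 0 else f k).
Proof.
  intros H0 H1 Hne.
  rewrite <- (sumR_delta n k0 f), <- (sumR_delta n k1 f), <- !sumR_plus by auto.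
  apply sumR_ext; intros k Hk.
  destruct (Nat.eqb_spec k0 k), (Nat.eqb_spec k1 k); simpl; try ring. congruence.
Qed.

Lemma sumR_ge_pair n f k0 k1 : (forall k, (k < n)%nat -> 0 <= f k) ->
  (k0 < n)%nat -> (k1 < n)%nat -> k0 <> k1 -> f k0 + f k1 <= sumR n f.
Proof.
  intros Hf H0 H1 Hne. rewrite (sumR_split_pair n f k0 k1) by auto.
  enough (0 <= sumR n (fun k => if orb (Nat.eqb k0 k) (Nat.eqb k1 k) then 0 else f k)) by lra.
  apply sumR_nonneg; intros k Hk. destruct (orb _ _); [lra | auto].
Qed.

Lemma sumR_eq_pair n f k0 k1 : (forall k, (k < n)%nat -> 0 <= f k) ->
  (k0 < n)%nat -> (k1 < n)%nat -> k0 <> k1 -> sumR n f = f k0 + f k1 ->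
  forall k, (k < n)%nat -> k <> k0 -> k <> k1 -> f k = 0.
Proof.
  intros Hf H0 H1 Hne Heq k Hk Hk0 Hk1.
  set (g := fun k => if orb (Nat.eqb k0 k) (Nat.eqb k1 k) then 0 else f k).
  assert (Hg : forall k, (k < n)%nat -> 0 <= g k)
    by (intros j Hj; unfold g; destruct (orb _ _); [lra | auto]).
  assert (Hgk : g k = f k).
  { unfold g. destruct (Nat.eqb_spec k0 k), (Nat.eqb_spec k1 k); simpl; congruence. }
  pose proof (sumR_ge_term n g k Hg Hk).
  rewrite (sumR_split_pair n f k0 k1) in Heq by auto. fold g in Heq.
  pose proof (Hf k Hk). lra.
Qed.

Lemma INR_countN n P : INR (countN n P) = sumR n (fun i => if P i then 1 else 0).
Proof.
  induction n; simpl countN; simpl sumR; [auto |].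
  rewrite plus_INR, IHn. destruct (P n); simpl; lra.
Qed.

Lemma INR_sumN n f : INR (sumN n f) = sumR n (fun i => INR (f i)).
Proof. induction n; simpl sumN; simpl sumR; [auto | rewrite plus_INR, IHn; auto]. Qed.

Lemma sumR_square_sym n (g : nat -> nat -> R) :
  (forall i j, (i < n)%nat -> (j < n)%nat -> g i j = g j i) ->
  (forall i, (i < n)%nat -> g i i = 0) ->
  sumR n (fun i => sumR n (fun j => g i j)) = 2 * sumR n (fun i => sumR i (fun j => g j i)).
Proof.
  intros Hs Hd.
  enough (forall N, (N <= n)%nat ->
    sumR N (fun i => sumR N (fun j => g i j)) = 2 * sumR N (fun i => sumR i (fun j => g j i)))
    by auto.
  induction N; intros HN; simpl; [lra |].
  rewrite sumR_plus, IHN, Hd by lia.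
  rewrite (sumR_ext N (fun j => g N j) (fun j => g j N)) by (intros; apply Hs; lia).
  lra.
Qed.

Lemma sumR2_ge_term n (f : nat -> nat -> R) i j :
  (forall i j, (i < n)%nat -> (j < n)%nat -> 0 <= f i j) -> (i < n)%nat -> (j < n)%nat ->
  f i j <= sumR n (fun i => sumR n (fun j => f i j)).
Proof.
  intros Hf Hi Hj.
  apply Rle_trans with (sumR n (fun j => f i j)).
  - apply (sumR_ge_term n (fun j => f i j)); auto.
  - apply (sumR_ge_term n (fun i => sumR n (fun j => f i j))); auto.
    intros; apply sumR_nonneg; auto.
Qed.

(** * Orthonormal eigenbases of symmetric matrices *)

Section Spectral.

Variables (n : nat) (A v : nat -> nat -> R) (lam : nat -> R).
Hypothesis Hv : orthonormal n v.
Hypothesis HA : forall i j, (i < n)%nat -> (j < n)%nat -> A i j = A j i.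
Hypothesis Heig : forall k i, (k < n)%nat -> (i < n)%nat ->
  sumR n (fun j => A i j * v k j) = lam k * v k i.

Let Hvt : orthonormal n (fun t k => v k t) := OrthogonalMatrix.orthonormal_transpose n v Hv.

Lemma parseval (x y : nat -> R) :
  sumR n (fun k => sumR n (fun j => v k j * x j) * sumR n (fun l => v k l * y l))
  = sumR n (fun j => x j * y j).
Proof.
  transitivity (sumR n (fun j => sumR n (fun l =>
    sumR n (fun k => v k j * v k l) * (x j * y l)))).
  - transitivity (sumR n (fun k => sumR n (fun j => sumR n (fun l =>
      (v k j * v k l) * (x j * y l))))).
    { sumR_congr. rewrite sumR_mult_r. sumR_congr. rewrite <- sumR_scal. sumR_congr. ring. }
    rewrite sumR_swap. sumR_congr. rewrite sumR_swap. sumR_congr. symmetry; apply sumR_mult_r.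
  - apply sumR_ext; intros j Hj. rewrite <- (sumR_delta_mul n j (fun l => x j * y l)) by auto.
    apply sumR_ext; intros l Hl. rewrite (Hvt j l) by auto. reflexivity.
Qed.

Lemma spectral_decomposition i j : (i < n)%nat -> (j < n)%nat ->
  A i j = sumR n (fun k => lam k * v k i * v k j).
Proof.
  intros Hi Hj.
  transitivity (sumR n (fun l => A i l * sumR n (fun k => v k l * v k j))).
  { rewrite <- (sumR_delta_mul n j (A i)) by auto.
    apply sumR_ext; intros l Hl. rewrite (Hvt l j), Nat.eqb_sym by auto. ring. }
  transitivity (sumR n (fun k => sumR n (fun l => A i l * v k l) * v k j)).
  { transitivity (sumR n (fun l => sumR n (fun k => A i l * v k l * v k j))).
    { sumR_congr. rewrite <- sumR_scal. sumR_congr. ring. }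
    rewrite sumR_swap. sumR_congr. symmetry; apply sumR_mult_r. }
  apply sumR_ext; intros k Hk. rewrite Heig by auto. reflexivity.
Qed.

Lemma eigen_coord w k : (k < n)%nat ->
  lam k * sumR n (fun j => v k j * w j) = sumR n (fun i => v k i * sumR n (fun j => A i j * w j)).
Proof.
  intros Hk. rewrite <- sumR_scal.
  transitivity (sumR n (fun j => sumR n (fun i => A j i * v k i) * w j)).
  { apply sumR_ext; intros j Hj. rewrite Heig by auto. ring. }
  transitivity (sumR n (fun j => sumR n (fun i => A j i * v k i * w j))).
  { sumR_congr. apply sumR_mult_r. }
  rewrite sumR_swap. apply sumR_ext; intros i Hi.
  rewrite <- sumR_scal. apply sumR_ext; intros j Hj. rewrite HA by auto. ring.
Qed.

Lemma rayleigh_le M w : (forall k, (k < n)%nat -> lam k <= M) ->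
  sumR n (fun i => sumR n (fun j => A i j * w j) * w i) <= M * sumR n (fun i => w i * w i).
Proof.
  intros HM.
  rewrite <- (parseval (fun i => sumR n (fun j => A i j * w j)) w), <- (parseval w w),
    <- sumR_scal.
  apply sumR_le; intros k Hk.
  rewrite <- eigen_coord, Rmult_assoc by auto.
  apply Rmult_le_compat_r; [apply Rle_0_sqr | auto].
Qed.

Lemma sum_eigenvalues : sumR n lam = sumR n (fun i => A i i).
Proof.
  transitivity (sumR n (fun k => lam k * sumR n (fun i => v k i * v k i))).
  { apply sumR_ext; intros k Hk. rewrite Hv, Nat.eqb_refl by auto. ring. }
  transitivity (sumR n (fun i => sumR n (fun k => lam k * v k i * v k i))).
  { rewrite sumR_swap. sumR_congr. rewrite <- sumR_scal. sumR_congr. ring. }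
  apply sumR_ext; intros i Hi. rewrite (spectral_decomposition i i Hi Hi). reflexivity.
Qed.

Lemma sum_eigenvalues_sq :
  sumR n (fun k => lam k * lam k) = sumR n (fun i => sumR n (fun j => A i j * A i j)).
Proof.
  transitivity (sumR n (fun k => sumR n (fun i =>
    sumR n (fun j => v k j * A i j) * sumR n (fun l => v k l * A i l)))).
  - apply sumR_ext; intros k Hk.
    pose proof (Hv k k Hk Hk) as Hnorm. rewrite Nat.eqb_refl in Hnorm.
    rewrite <- (Rmult_1_r (lam k * lam k)), <- Hnorm, <- sumR_scal.
    apply sumR_ext; intros i Hi.
    transitivity (sumR n (fun j => A i j * v k j) * sumR n (fun j => A i j * v k j)).
    { rewrite Heig by auto. ring. }
    f_equal; sumR_congr; ring.
  - rewrite sumR_swap. sumR_congr. apply (parseval (fun j => A _ j) (fun j => A _ j)).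
Qed.

Lemma spectral_decomposition_pair k0 k1 i j :
  (k0 < n)%nat -> (k1 < n)%nat -> k0 <> k1 ->
  (forall k, (k < n)%nat -> k <> k0 -> k <> k1 -> lam k = 0) ->
  (i < n)%nat -> (j < n)%nat ->
  A i j = lam k0 * v k0 i * v k0 j + lam k1 * v k1 i * v k1 j.
Proof.
  intros H0 H1 Hne Hzero Hi Hj.
  rewrite spectral_decomposition, (sumR_split_pair n _ k0 k1) by auto.
  rewrite (sumR_ext n _ (fun _ => 0)), sumR_const; [ring |].
  intros k Hk. destruct (Nat.eqb_spec k0 k), (Nat.eqb_spec k1 k); simpl; auto.
  rewrite Hzero by auto. ring.
Qed.

(* Flipping the sign of an eigenvector on one color class of a bipartite
   support turns eigenvalue mu into -mu; some basis vector must overlap it. *)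
Lemma eigenvalue_opp_of_bipartite (col : nat -> bool) k0 :
  (forall i j, (i < n)%nat -> (j < n)%nat -> A i j <> 0 -> col i <> col j) ->
  (k0 < n)%nat -> lam k0 <> 0 ->
  exists k1, (k1 < n)%nat /\ k0 <> k1 /\ lam k1 = - lam k0.
Proof.
  intros Hcol Hk0 Hnz.
  set (s := fun i => if col i then 1 else -1).
  set (w := fun i => s i * v k0 i).
  assert (Hw : forall i, (i < n)%nat -> sumR n (fun j => A i j * w j) = - lam k0 * w i).
  { intros i Hi.
    transitivity (sumR n (fun j => - s i * (A i j * v k0 j))).
    { apply sumR_ext; intros j Hj. unfold w, s.
      destruct (Req_dec_T (A i j) 0) as [E | E]; [rewrite E; ring |].
      pose proof (Hcol i j Hi Hj E). destruct (col i), (col j); try congruence; ring. }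
    rewrite sumR_scal, Heig by auto. unfold w. ring. }
  set (c := fun k => sumR n (fun j => v k j * w j)).
  assert (Hlc : forall k, (k < n)%nat -> lam k * c k = - lam k0 * c k).
  { intros k Hk. unfold c. rewrite eigen_coord, <- sumR_scal by auto.
    apply sumR_ext; intros i Hi. rewrite Hw by auto. ring. }
  assert (Hcc : sumR n (fun k => c k * c k) = 1).
  { unfold c. rewrite parseval.
    pose proof (Hv k0 k0 Hk0 Hk0) as Hnorm. rewrite Nat.eqb_refl in Hnorm. rewrite <- Hnorm.
    apply sumR_ext; intros j Hj. unfold w, s. destruct (col j); ring. }
  destruct (sumR_neq0 n (fun k => c k * c k)) as [k1 [Hk1 Hc1]]; [lra |].
  assert (c k1 <> 0) by (intro E; rewrite E in Hc1; lra).
  exists k1. split; [auto | split].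
  - intros <-. pose proof (Hlc k0 Hk0).
    apply Hnz, (Rmult_eq_reg_r (c k0)); auto; lra.
  - apply (Rmult_eq_reg_r (c k1)); auto.
Qed.

End Spectral.

(** * Real inequalities and the Estrada lower bound *)

Lemma two_le_add_inv y : 0 < y -> 2 <= y + / y.
Proof.
  intros Hy.
  assert (0 <= (y - 1) * (y - 1) * / y) by
    (apply Rmult_le_pos; [apply Rle_0_sqr | left; apply Rinv_0_lt_compat; lra]).
  replace ((y - 1) * (y - 1) * / y) with (y + / y - 2) in H by (field; lra).
  lra.
Qed.

(* Cauchy-Schwarz in the form used for [m/R <= lambda], obtained from AM-GM
   by optimising the free parameter at [t = Q / S]. *)
Lemma sq_le_mul_of_amgm S P Q : 0 < S -> 0 < Q ->
  (forall t, 0 < t -> 2 * S <= t * P + Q / t) -> S * S <= P * Q.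
Proof.
  intros HS HQ Ht.
  specialize (Ht (Q / S) (Rdiv_lt_0_compat _ _ HQ HS)).
  replace (Q / (Q / S)) with S in Ht by (field; lra).
  apply (Rmult_le_reg_l (/ S)); [apply Rinv_0_lt_compat; lra |].
  replace (/ S * (S * S)) with S by (field; lra).
  replace (/ S * (P * Q)) with (Q / S * P) by (field; lra).
  lra.
Qed.

Lemma cosh_le a b : 0 <= a -> a <= b -> cosh a <= cosh b.
Proof.
  intros Ha Hab. unfold cosh.
  assert (exp a <= exp b) by
    (destruct (Req_dec_T a b); [subst; lra | left; apply exp_increasing; lra]).
  assert (E1 : exp (-a) = exp (-a-b) * exp b) by (rewrite <- exp_plus; f_equal; ring).
  assert (E2 : exp (-b) = exp (-a-b) * exp a) by (rewrite <- exp_plus; f_equal; ring).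
  assert (exp (-a-b) <= 1).
  { rewrite <- exp_0. destruct (Req_dec_T (-a-b) 0) as [E | E];
      [rewrite E; lra | left; apply exp_increasing; lra]. }
  pose proof (exp_pos (-a-b)).
  rewrite E1, E2. nra.
Qed.

Lemma exists_argmax n (f : nat -> R) : (1 <= n)%nat ->
  exists k0, (k0 < n)%nat /\ forall k, (k < n)%nat -> f k <= f k0.
Proof.
  induction n; intros H; [lia |].
  destruct (Nat.eq_dec n 0) as [-> | Hn].
  - exists 0%nat. split; [lia |]. intros k Hk. replace k with 0%nat by lia. lra.
  - destruct IHn as [k0 [Hk0 Hm]]; [lia |].
    destruct (Rle_dec (f n) (f k0)).
    + exists k0. split; [lia |]. intros k Hk.
      destruct (Nat.eq_dec k n) as [-> | ]; [auto | apply Hm; lia].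
    + exists n. split; [lia |]. intros k Hk.
      destruct (Nat.eq_dec k n) as [-> | ]; [lra |].
      specialize (Hm k ltac:(lia)). lra.
Qed.

Section EstradaPair.

Variables (n : nat) (lam : nat -> R) (k0 k1 : nat) (M : R).
Hypotheses (Hk0 : (k0 < n)%nat) (Hk1 : (k1 < n)%nat) (Hne : k0 <> k1).
Hypotheses (Hlam0 : lam k0 = M) (Hlam1 : lam k1 = - M) (Htrace : sumR n lam = 0).

(* With trace zero, [EE = n + sum_k (e^lam_k - 1 - lam_k)] and every term of
   the last sum is nonnegative. *)
Let excess k := exp (lam k) - 1 - lam k.

Let excess_nonneg k : (k < n)%nat -> 0 <= excess k.
Proof. intros _. pose proof (exp_ineq1_le (lam k)). unfold excess. lra. Qed.

Let estrada_excess : estrada n lam = INR n + sumR n excess.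
Proof.
  unfold estrada, excess.
  rewrite (sumR_ext n _ (fun k => 1 + lam k + (exp (lam k) - 1 - lam k))) by (intros; ring).
  rewrite !sumR_plus, sumR_const, Htrace. ring.
Qed.

Let excess_pair : excess k0 + excess k1 = 2 * cosh M - 2.
Proof. unfold excess, cosh. rewrite Hlam0, Hlam1. field. Qed.

Lemma estrada_ge_pair : 2 * cosh M + INR n - 2 <= estrada n lam.
Proof.
  rewrite estrada_excess. pose proof excess_pair.
  pose proof (sumR_ge_pair n excess k0 k1 excess_nonneg Hk0 Hk1 Hne). lra.
Qed.

Lemma estrada_eq_pair : estrada n lam = 2 * cosh M + INR n - 2 ->
  forall k, (k < n)%nat -> k <> k0 -> k <> k1 -> lam k = 0.
Proof.
  intros Heq k Hk H0 H1. rewrite estrada_excess in Heq. pose proof excess_pair.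
  pose proof (sumR_eq_pair n excess k0 k1 excess_nonneg Hk0 Hk1 Hne ltac:(lra) k Hk H0 H1).
  destruct (Req_dec_T (lam k) 0) as [E | E]; auto.
  pose proof (exp_ineq1 _ E). unfold excess in *. lra.
Qed.

End EstradaPair.

(** * Degrees, edges and the Randic index *)

Lemma adjmat_nonneg adj i j : 0 <= adjmat adj i j.
Proof. unfold adjmat; destruct (adj i j); lra. Qed.

Lemma adjmat_neq0 adj i j : adjmat adj i j <> 0 -> adj i j = true.
Proof. unfold adjmat. destruct (adj i j); [auto | lra]. Qed.

Lemma deg_INR n adj i : INR (deg n adj i) = sumR n (fun j => adjmat adj i j).
Proof. apply INR_countN. Qed.

Lemma has_neighbor n adj : (2 <= n)%nat -> connected n adj ->
  forall i, (i < n)%nat -> exists j, (j < n)%nat /\ adj i j = true.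
Proof.
  intros Hn Hc i Hi.
  set (j := if Nat.eqb i 0 then 1%nat else 0%nat).
  assert (Hj : (j < n)%nat /\ j <> i) by (unfold j; destruct (Nat.eqb_spec i 0); lia).
  assert (Hreach : forall k, reach n adj i k -> k = i \/ exists j, (j < n)%nat /\ adj i j = true).
  { intros k Hk; induction Hk as [| k l _ IH Hl Hkl]; auto.
    right. destruct IH as [-> | IH]; eauto. }
  destruct (Hreach j (Hc i j Hi (proj1 Hj))) as [E | E]; [lia | auto].
Qed.

Section Graph.

Variables (n : nat) (adj : nat -> nat -> bool).
Hypothesis Hg : is_graph n adj.

Lemma adjmat_sym i j : (i < n)%nat -> (j < n)%nat -> adjmat adj i j = adjmat adj j i.
Proof. intros Hi Hj. unfold adjmat. rewrite (proj1 Hg i j); auto. Qed.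

Lemma adjmat_diag i : (i < n)%nat -> adjmat adj i i = 0.
Proof. intros Hi. unfold adjmat. rewrite (proj2 Hg i); auto. Qed.

Lemma num_edges_double :
  2 * INR (num_edges n adj) = sumR n (fun i => sumR n (fun j => adjmat adj i j)).
Proof.
  rewrite sumR_square_sym by (auto using adjmat_sym, adjmat_diag).
  unfold num_edges. rewrite INR_sumN. f_equal. sumR_congr. apply INR_countN.
Qed.

Definition randic_weight (i j : nat) : R :=
  if adj i j then / sqrt (INR (deg n adj i) * INR (deg n adj j)) else 0.

Lemma randic_double :
  2 * randic n adj = sumR n (fun i => sumR n (fun j => randic_weight i j)).
Proof.
  rewrite sumR_square_sym.
  - unfold randic, randic_weight. f_equal.
    sumR_congr. sumR_congr. rewrite Rmult_comm. reflexivity.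
  - intros i j Hi Hj. unfold randic_weight. rewrite (proj1 Hg i j), Rmult_comm; auto.
  - intros i Hi. unfold randic_weight. rewrite (proj2 Hg i); auto.
Qed.

Lemma deg_ge1 i j : (i < n)%nat -> (j < n)%nat -> adj i j = true -> 1 <= INR (deg n adj i).
Proof.
  intros Hi Hj Ha. rewrite deg_INR.
  replace 1 with (adjmat adj i j) by (unfold adjmat; rewrite Ha; auto).
  apply (sumR_ge_term n (fun j => adjmat adj i j)); auto using adjmat_nonneg.
Qed.

Lemma randic_weight_pos i j : (i < n)%nat -> (j < n)%nat -> adj i j = true ->
  0 < randic_weight i j.
Proof.
  intros Hi Hj Ha. unfold randic_weight. rewrite Ha.
  pose proof (deg_ge1 i j Hi Hj Ha).
  pose proof (deg_ge1 j i Hj Hi ltac:(rewrite (proj1 Hg j i); auto)).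
  apply Rinv_0_lt_compat, sqrt_lt_R0. nra.
Qed.

Lemma randic_weight_nonneg i j : (i < n)%nat -> (j < n)%nat -> 0 <= randic_weight i j.
Proof.
  intros Hi Hj. destruct (adj i j) eqn:Ha.
  - left. apply randic_weight_pos; auto.
  - unfold randic_weight. rewrite Ha. lra.
Qed.

(* Pointwise AM-GM with weights [sqrt (d_i d_j)]: summed over all ordered pairs it
   reads [4 m <= t * P + 2 R / t]. *)
Lemma adjmat_amgm t i j : 0 < t -> (i < n)%nat -> (j < n)%nat ->
  2 * adjmat adj i j <=
  t * (adjmat adj i j * sqrt (INR (deg n adj j)) * sqrt (INR (deg n adj i)))
  + randic_weight i j / t.
Proof.
  intros Ht Hi Hj. unfold adjmat, randic_weight. destruct (adj i j) eqn:Ha.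
  - pose proof (deg_ge1 i j Hi Hj Ha) as Hdi.
    pose proof (deg_ge1 j i Hj Hi ltac:(rewrite (proj1 Hg j i); auto)) as Hdj.
    rewrite sqrt_mult by lra.
    pose proof (sqrt_lt_R0 _ (Rlt_le_trans _ _ _ Rlt_0_1 Hdi)).
    pose proof (sqrt_lt_R0 _ (Rlt_le_trans _ _ _ Rlt_0_1 Hdj)).
    set (y := t * (1 * sqrt (INR (deg n adj j)) * sqrt (INR (deg n adj i)))).
    assert (Hy : 0 < y) by (unfold y; rewrite Rmult_1_l; repeat apply Rmult_lt_0_compat; auto).
    replace (/ (sqrt (INR (deg n adj i)) * sqrt (INR (deg n adj j))) / t) with (/ y)
      by (unfold y; field; repeat split; lra).
    pose proof (two_le_add_inv y Hy). lra.
  - unfold Rdiv. rewrite Rmult_0_l. lra.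
Qed.

End Graph.

Lemma num_edges_div_randic_le n adj lam v M :
  is_graph n adj -> (2 <= n)%nat -> connected n adj -> orthonormal n v ->
  (forall k i, (k < n)%nat -> (i < n)%nat ->
     sumR n (fun j => adjmat adj i j * v k j) = lam k * v k i) ->
  (forall k, (k < n)%nat -> lam k <= M) ->
  0 < INR (num_edges n adj) / randic n adj <= M.
Proof.
  intros Hg Hn Hconn Hv Heig HM.
  set (S := sumR n (fun i => sumR n (fun j => adjmat adj i j))).
  set (Q := sumR n (fun i => sumR n (fun j => randic_weight n adj i j))).
  set (w := fun i => sqrt (INR (deg n adj i))).
  set (P := sumR n (fun i => sumR n (fun j => adjmat adj i j * w j) * w i)).
  destruct (has_neighbor n adj Hn Hconn 0%nat ltac:(lia)) as [j0 [Hj0 Ha0]].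
  assert (HS : 0 < S).
  { apply Rlt_le_trans with (adjmat adj 0%nat j0).
    - unfold adjmat. rewrite Ha0. lra.
    - apply sumR2_ge_term; auto using adjmat_nonneg; lia. }
  assert (HQ : 0 < Q).
  { apply Rlt_le_trans with (randic_weight n adj 0%nat j0).
    - apply randic_weight_pos; auto; lia.
    - apply sumR2_ge_term; auto using randic_weight_nonneg; lia. }
  assert (HP : P <= M * S).
  { unfold P. replace S with (sumR n (fun i => w i * w i)).
    - exact (rayleigh_le n (adjmat adj) v lam Hv (adjmat_sym n adj Hg) Heig M w HM).
    - unfold S. apply sumR_ext; intros i Hi. unfold w.
      rewrite sqrt_sqrt, deg_INR by apply pos_INR. reflexivity. }
  assert (Hamgm : forall t, 0 < t -> 2 * S <= t * P + Q / t).
  { intros t Ht. unfold S, P, Q, Rdiv.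
    rewrite <- sumR_scal, !sumR_mult_r, <- sumR_scal, <- sumR_plus.
    apply sumR_le; intros i Hi.
    rewrite <- sumR_scal, !sumR_mult_r, <- sumR_scal, <- sumR_plus.
    apply sumR_le; intros j Hj.
    apply (adjmat_amgm n adj Hg t i j Ht Hi Hj). }
  assert (HSQ : S <= M * Q).
  { pose proof (sq_le_mul_of_amgm S P Q HS HQ Hamgm).
    apply (Rmult_le_reg_l S); [auto | nra]. }
  replace (INR (num_edges n adj) / randic n adj) with (S / Q).
  - split; [apply Rdiv_lt_0_compat; auto |].
    apply (Rmult_le_reg_r Q); [auto |]. unfold Rdiv. rewrite Rmult_assoc, Rinv_l; lra.
  - unfold S, Q. rewrite <- num_edges_double, <- randic_double by auto. field.
    unfold Q in HQ. rewrite <- randic_double in HQ by auto. lra.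
Qed.

Lemma sum_eigenvalues_adjmat n adj v lam : is_graph n adj -> orthonormal n v ->
  (forall k i, (k < n)%nat -> (i < n)%nat ->
     sumR n (fun j => adjmat adj i j * v k j) = lam k * v k i) ->
  sumR n lam = 0.
Proof.
  intros Hg Hv Heig. rewrite (sum_eigenvalues n (adjmat adj) v lam Hv Heig).
  rewrite (sumR_ext n _ (fun _ => 0)), sumR_const; [ring |].
  apply adjmat_diag; auto.
Qed.

(** * Recognizing complete bipartite graphs *)

Lemma countN_mono P i j : (i <= j)%nat -> (countN i P <= countN j P)%nat.
Proof.
  induction j; intros H.
  - replace i with 0%nat by lia. lia.
  - destruct (Nat.eq_dec i (S j)) as [-> | Hne]; [lia |].
    simpl. specialize (IHj ltac:(lia)). lia.
Qed.

Lemma countN_strict P i j : P i = true -> (i < j)%nat -> (countN i P < countN j P)%nat.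
Proof.
  intros Hp H. apply Nat.lt_le_trans with (countN (S i) P).
  - simpl. rewrite Hp. lia.
  - apply countN_mono. lia.
Qed.

Lemma countN_compl P n : (countN n P + countN n (fun j => negb (P j)) = n)%nat.
Proof. induction n; simpl; [lia | destruct (P n); simpl; lia]. Qed.

(* Vertices of color [true] are numbered by their rank among that color,
   the others by [p] plus their rank among the others. *)
Lemma iso_complete_bipartite_of_coloring n adj (sg : nat -> bool) i0 j0 :
  (forall i j, (i < n)%nat -> (j < n)%nat -> adj i j = xorb (sg i) (sg j)) ->
  (i0 < n)%nat -> (j0 < n)%nat -> adj i0 j0 = true ->
  iso_complete_bipartite n adj.
Proof.
  intros Hadj Hi0 Hj0 Ha0.
  set (Q := fun j => negb (sg j)).
  set (p := countN n sg). set (q := countN n Q).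
  assert (Hpq := countN_compl sg n). fold Q p q in Hpq.
  assert (HP : forall i, (i < n)%nat -> sg i = true -> (countN i sg < p)%nat)
    by (intros; apply countN_strict; auto).
  assert (HQ : forall i, (i < n)%nat -> sg i = false -> (countN i Q < q)%nat)
    by (intros i Hi Hs; apply countN_strict; auto; unfold Q; rewrite Hs; auto).
  assert (Hcol : exists it jf, (it < n)%nat /\ (jf < n)%nat /\ sg it = true /\ sg jf = false).
  { rewrite Hadj in Ha0 by auto.
    destruct (sg i0) eqn:E1, (sg j0) eqn:E2; simpl in Ha0; try discriminate; eauto 7. }
  destruct Hcol as [it [jf [Hit [Hjf [Et Ef]]]]].
  exists p, q. split; [| split; [| split; [lia |]]].
  { specialize (HP it Hit Et). lia. }
  { specialize (HQ jf Hjf Ef). lia. }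
  set (f := fun i => if sg i then countN i sg else (p + countN i Q)%nat).
  assert (Hlt : forall i, (i < n)%nat -> Nat.ltb (f i) p = sg i).
  { intros i Hi. unfold f. destruct (sg i) eqn:E.
    - apply Nat.ltb_lt. auto.
    - apply Nat.ltb_ge. lia. }
  exists f. split; [| split].
  - intros i Hi. unfold f. destruct (sg i) eqn:E.
    + specialize (HP i Hi E). lia.
    + specialize (HQ i Hi E). lia.
  - intros i j Hi Hj Hf.
    assert (Hs : sg i = sg j) by (rewrite <- (Hlt i), <- (Hlt j), Hf; auto).
    unfold f in Hf. rewrite <- Hs in Hf.
    destruct (sg i) eqn:Ei;
      destruct (Nat.lt_trichotomy i j) as [H | [H | H]]; auto; exfalso.
    + pose proof (countN_strict sg i j Ei H). lia.
    + pose proof (countN_strict sg j i (eq_sym Hs) H). lia.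
    + assert (Q i = true) by (unfold Q; rewrite Ei; auto).
      pose proof (countN_strict Q i j H0 H). lia.
    + assert (Q j = true) by (unfold Q; rewrite <- Hs; auto).
      pose proof (countN_strict Q j i H0 H). lia.
  - intros i j Hi Hj. unfold Kpq_adj. rewrite !Hlt by auto. auto.
Qed.

Lemma coloring_of_iso_complete_bipartite n adj : iso_complete_bipartite n adj ->
  exists sg : nat -> bool,
    forall i j, (i < n)%nat -> (j < n)%nat -> adj i j = xorb (sg i) (sg j).
Proof.
  intros [p [q [_ [_ [_ [f [_ [_ Hf]]]]]]]].
  exists (fun i => Nat.ltb (f i) p). intros i j Hi Hj. rewrite Hf; auto.
Qed.

(* From [A = M a a^T - M b b^T]: the zero diagonal gives [b_i = +-a_i], no
   isolated vertex gives [a_i <> 0], and then [A_ij = 1] exactly when the signs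
   of [b_i / a_i] and [b_j / a_j] differ. *)
Lemma coloring_of_rank_two n adj (a b : nat -> R) M :
  is_graph n adj -> (forall i, (i < n)%nat -> exists j, (j < n)%nat /\ adj i j = true) ->
  0 < M ->
  (forall i j, (i < n)%nat -> (j < n)%nat -> adjmat adj i j = M * a i * a j - M * b i * b j) ->
  exists sg : nat -> bool,
    forall i j, (i < n)%nat -> (j < n)%nat -> adj i j = xorb (sg i) (sg j).
Proof.
  intros Hg Hnbr HM H.
  assert (Hsq : forall i, (i < n)%nat -> (b i - a i) * (b i + a i) = 0).
  { intros i Hi. pose proof (H i i Hi Hi) as E. rewrite (adjmat_diag n adj Hg) in E by auto.
    assert (M * ((b i - a i) * (b i + a i)) = 0)
      by (transitivity (- (M * a i * a i - M * b i * b i)); [ring | rewrite <- E; ring]).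
    destruct (Rmult_integral _ _ H0); lra. }
  assert (Hnz : forall i, (i < n)%nat -> a i <> 0).
  { intros i Hi Ha. destruct (Hnbr i Hi) as [j [Hj Haj]].
    pose proof (H i j Hi Hj) as E. unfold adjmat in E. rewrite Haj in E.
    pose proof (Hsq i Hi) as Hb. rewrite Ha in Hb.
    assert (b i = 0) by (destruct (Rmult_integral _ _ Hb); lra).
    rewrite Ha, H0 in E. lra. }
  assert (Hopp : forall i, (i < n)%nat -> b i <> a i -> b i = - a i).
  { intros i Hi Hne. destruct (Rmult_integral _ _ (Hsq i Hi)); lra. }
  exists (fun i => if Req_dec_T (b i) (a i) then true else false).
  intros i j Hi Hj. pose proof (H i j Hi Hj) as E. unfold adjmat in E.
  assert (Hp : M * a i * a j <> 0) by
    (repeat apply Rmult_integral_contrapositive_currified; auto; lra).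
  destruct (Req_dec_T (b i) (a i)) as [ei | ei], (Req_dec_T (b j) (a j)) as [ej | ej]; simpl.
  - rewrite ei, ej in E. destruct (adj i j); lra.
  - rewrite ei, (Hopp j Hj ej) in E. destruct (adj i j); auto. lra.
  - rewrite ej, (Hopp i Hi ei) in E. destruct (adj i j); auto. lra.
  - rewrite (Hopp j Hj ej), (Hopp i Hi ei) in E. destruct (adj i j); auto. lra.
Qed.

(** * The spectrum of a complete bipartite graph *)

Lemma exp_eq_interpolant s x : 0 < s -> x = 0 \/ x * x = s * s ->
  exp x = 1 + x * (sinh s / s) + x * x * ((cosh s - 1) / (s * s)).
Proof.
  intros Hs [-> | Hx].
  - rewrite exp_0. ring.
  - assert (Hpm : (x - s) * (x + s) = 0) by (transitivity (x * x - s * s); [ring | rewrite Hx; ring]).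
    unfold sinh, cosh.
    destruct (Rmult_integral _ _ Hpm) as [E | E].
    + replace x with s by lra. field. lra.
    + replace x with (- s) by lra. field. lra.
Qed.

Section CompleteBipartite.

Variables (n : nat) (adj : nat -> nat -> bool) (sg : nat -> bool).
Hypothesis Hadj : forall i j, (i < n)%nat -> (j < n)%nat -> adj i j = xorb (sg i) (sg j).

Variables (i0 j0 : nat).
Hypotheses (Hi0 : (i0 < n)%nat) (Hj0 : (j0 < n)%nat) (Ha0 : adj i0 j0 = true).

Let Nt := INR (countN n sg).
Let Nf := INR (countN n (fun j => negb (sg j))).

Lemma sumR_coloring x y : sumR n (fun i => if sg i then x else y) = Nt * x + Nf * y.
Proof.
  unfold Nt, Nf. rewrite !INR_countN, !sumR_mult_r, <- sumR_plus.
  apply sumR_ext; intros i Hi. destruct (sg i); simpl; ring.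
Qed.

Lemma color_classes_nonempty : 1 <= Nt /\ 1 <= Nf.
Proof.
  assert (Hcount : forall P i, (i < n)%nat -> P i = true -> 1 <= INR (countN n P)).
  { intros P i Hi HP. apply (le_INR 1). pose proof (countN_strict P i n HP Hi). lia. }
  pose proof Ha0 as E. rewrite Hadj in E by auto. unfold Nt, Nf.
  destruct (sg i0) eqn:E0, (sg j0) eqn:E1; simpl in E; try discriminate; split;
    solve [apply (Hcount _ i0); auto; rewrite E0; auto | apply (Hcount _ j0); auto; rewrite E1; auto].
Qed.

Lemma deg_coloring i : (i < n)%nat -> INR (deg n adj i) = if sg i then Nf else Nt.
Proof.
  intros Hi. rewrite deg_INR. unfold Nt, Nf. rewrite !INR_countN.
  destruct (sg i) eqn:Ei; apply sumR_ext; intros j Hj; unfold adjmat;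
    rewrite Hadj, Ei by auto; destruct (sg j); reflexivity.
Qed.

Lemma is_graph_coloring : is_graph n adj.
Proof.
  split; intros; rewrite !Hadj by auto; [destruct (sg i), (sg j) | destruct (sg i)]; auto.
Qed.

Lemma randic_coloring : randic n adj * sqrt (Nt * Nf) = INR (num_edges n adj).
Proof.
  apply (Rmult_eq_reg_l 2); [| lra].
  rewrite <- Rmult_assoc, randic_double, num_edges_double by apply is_graph_coloring.
  rewrite sumR_mult_r. sumR_congr. rewrite sumR_mult_r. apply sumR_ext; intros j Hj.
  unfold randic_weight, adjmat. destruct (adj _ j) eqn:Ea; [| ring].
  rewrite Hadj in Ea by auto. rewrite !deg_coloring by auto.
  assert (Hc : 0 < sqrt (Nt * Nf)).
  { apply sqrt_lt_R0. pose proof color_classes_nonempty. nra. }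
  destruct (sg _), (sg j); simpl in Ea; try discriminate;
    rewrite ?(Rmult_comm Nf Nt); field; lra.
Qed.

Lemma num_edges_coloring : INR (num_edges n adj) = Nt * Nf.
Proof.
  apply (Rmult_eq_reg_l 2); [| lra].
  rewrite num_edges_double by apply is_graph_coloring.
  rewrite (sumR_ext n _ (fun i => if sg i then Nf else Nt)), sumR_coloring; [ring |].
  intros i Hi. rewrite <- deg_coloring, deg_INR; auto.
Qed.

Section Spectrum.

Variables (v : nat -> nat -> R) (lam : nat -> R).
Hypothesis Hv : orthonormal n v.
Hypothesis Heig : forall k i, (k < n)%nat -> (i < n)%nat ->
  sumR n (fun j => adjmat adj i j * v k j) = lam k * v k i.

(* [lam * v_i] is the sum [T] of [v] over the color class opposite to [i]; so
   [lam T_t = Nt T_f] and [lam T_f = Nf T_t], and [T_t = T_f = 0] would kill [v]. *)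
Lemma eigenvalue_coloring k : (k < n)%nat -> lam k = 0 \/ lam k * lam k = Nt * Nf.
Proof.
  intros Hk.
  set (Tt := sumR n (fun j => if sg j then v k j else 0)).
  set (Tf := sumR n (fun j => if sg j then 0 else v k j)).
  assert (HAv : forall i, (i < n)%nat -> lam k * v k i = if sg i then Tf else Tt).
  { intros i Hi. rewrite <- Heig by auto. unfold Tt, Tf.
    destruct (sg i) eqn:Ei; apply sumR_ext; intros j Hj; unfold adjmat;
      rewrite Hadj, Ei by auto; destruct (sg j); simpl; ring. }
  assert (Ht : lam k * Tt = Nt * Tf).
  { unfold Tt. rewrite <- sumR_scal.
    rewrite (sumR_ext n _ (fun j => if sg j then Tf else 0)), sumR_coloring; [ring |].
    intros j Hj. pose proof (HAv j Hj). destruct (sg j); [auto | ring]. }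
  assert (Hf : lam k * Tf = Nf * Tt).
  { unfold Tf. rewrite <- sumR_scal.
    rewrite (sumR_ext n _ (fun j => if sg j then 0 else Tt)), sumR_coloring; [ring |].
    intros j Hj. pose proof (HAv j Hj). destruct (sg j); [ring | auto]. }
  destruct (Req_dec_T (lam k) 0) as [E | E]; [left; auto | right].
  destruct (Req_dec_T (lam k * lam k) (Nt * Nf)) as [E2 | E2]; auto. exfalso.
  assert (Tt = 0 /\ Tf = 0) as [Ht0 Hf0].
  { split; apply (Rmult_eq_reg_l (lam k * lam k - Nt * Nf)); try lra;
      [rewrite Rmult_minus_distr_r, Rmult_assoc, Ht, <- Rmult_assoc, (Rmult_comm _ Nt),
         Rmult_assoc, Hf
      | rewrite Rmult_minus_distr_r, Rmult_assoc, Hf, <- Rmult_assoc, (Rmult_comm _ Nf),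
         Rmult_assoc, Ht]; ring. }
  pose proof (Hv k k Hk Hk) as Hnorm. rewrite Nat.eqb_refl in Hnorm.
  rewrite (sumR_ext n _ (fun _ => 0)), sumR_const in Hnorm; [lra |].
  intros i Hi. assert (lam k * v k i = 0) by (rewrite HAv by auto; destruct (sg i); auto).
  destruct (Rmult_integral _ _ H); [contradiction | rewrite H0; ring].
Qed.

Lemma estrada_coloring :
  estrada n lam = 2 * cosh (INR (num_edges n adj) / randic n adj) + INR n - 2.
Proof.
  pose proof color_classes_nonempty as [HNt HNf].
  set (s := sqrt (Nt * Nf)).
  assert (Hs : 0 < s) by (apply sqrt_lt_R0; nra).
  assert (Hss : s * s = Nt * Nf) by (apply sqrt_sqrt; nra).
  assert (Hratio : INR (num_edges n adj) / randic n adj = s).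
  { assert (HR : randic n adj = s).
    { apply (Rmult_eq_reg_r s); [| lra]. unfold s. rewrite randic_coloring, num_edges_coloring; auto. }
    rewrite HR, num_edges_coloring, <- Hss. field. lra. }
  assert (Htrace : sumR n lam = 0)
    by exact (sum_eigenvalues_adjmat n adj v lam is_graph_coloring Hv Heig).
  assert (Hsq : sumR n (fun k => lam k * lam k) = 2 * (s * s)).
  { rewrite (sum_eigenvalues_sq n (adjmat adj) v lam Hv Heig), Hss.
    rewrite (sumR_ext n _ (fun i => if sg i then Nf else Nt)), sumR_coloring; [ring |].
    intros i Hi. rewrite <- deg_coloring, deg_INR by auto.
    apply sumR_ext; intros j Hj. unfold adjmat. destruct (adj i j); ring. }
  unfold estrada. rewrite Hratio.
  rewrite (sumR_ext n _ (fun k => 1 + lam k * (sinh s / s) + lam k * lam k * ((cosh s - 1) / (s * s))))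
    by (intros k Hk; apply exp_eq_interpolant; [auto | rewrite Hss; apply eigenvalue_coloring; auto]).
  rewrite !sumR_plus, sumR_const, <- !sumR_mult_r, Htrace, Hsq. field. lra.
Qed.

End Spectrum.

End CompleteBipartite.


Theorem mainTheorem8 (n : nat) (adj : nat -> nat -> bool) (lam : nat -> R) :
  is_graph n adj -> (2 <= n)%nat -> connected n adj -> bipartite n adj ->
  adj_spectrum n adj lam ->
  estrada n lam >= 2 * cosh (INR (num_edges n adj) / randic n adj) + INR (n - 2)
  /\
  (estrada n lam = 2 * cosh (INR (num_edges n adj) / randic n adj) + INR (n - 2)
     <-> iso_complete_bipartite n adj).
Proof.
  intros Hg Hn Hconn [col Hcol] [v [Hv Heig]].
  assert (H0n : (0 < n)%nat) by lia.
  rewrite minus_INR by auto. change (INR 2) with 2.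
  destruct (exists_argmax n lam H0n) as [k0 [Hk0 Hmax]].
  destruct (num_edges_div_randic_le n adj lam v (lam k0) Hg Hn Hconn Hv Heig Hmax)
    as [Hmu0 Hmu].
  set (mu := INR (num_edges n adj) / randic n adj) in *.
  destruct (eigenvalue_opp_of_bipartite n (adjmat adj) v lam Hv (adjmat_sym n adj Hg) Heig
    col k0 (fun i j Hi Hj Ha => Hcol i j Hi Hj (adjmat_neq0 adj i j Ha)) Hk0 ltac:(lra))
    as [k1 [Hk1 [Hne Hlam1]]].
  pose proof (sum_eigenvalues_adjmat n adj v lam Hg Hv Heig) as Htrace.
  pose proof (estrada_ge_pair n lam k0 k1 (lam k0) Hk0 Hk1 Hne eq_refl Hlam1 Htrace).
  pose proof (cosh_le mu (lam k0) ltac:(lra) Hmu).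
  destruct (has_neighbor n adj Hn Hconn 0%nat H0n) as [j0 [Hj0 Ha0]].
  split; [lra | split].
  - intros Heq.
    pose proof (estrada_eq_pair n lam k0 k1 (lam k0) Hk0 Hk1 Hne eq_refl Hlam1
      Htrace ltac:(lra)) as Hzero.
    destruct (coloring_of_rank_two n adj (v k0) (v k1) (lam k0) Hg
      (has_neighbor n adj Hn Hconn) ltac:(lra)) as [sg Hsg].
    { intros i j Hi Hj. rewrite (spectral_decomposition_pair n (adjmat adj) v lam Hv Heig k0 k1)
        by auto. rewrite Hlam1. ring. }
    exact (iso_complete_bipartite_of_coloring n adj sg 0 j0 Hsg H0n Hj0 Ha0).
  - intros Hiso. destruct (coloring_of_iso_complete_bipartite n adj Hiso) as [sg Hsg].
    rewrite (estrada_coloring n adj sg Hsg 0 j0 H0n Hj0 Ha0 v lam Hv Heig). unfold mu. ring.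
Qed.
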